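(* Let $d>K\ge1$, $\mathbf Q\in\mathrm{St}(d,K)$, $\lambda_1>\dots>\lambda_K>0$, $\boldsymbol\Theta=\mathrm{diag}(\sqrt{\lambda_1},\dots,\sqrt{\lambda_K})$, $a_1>\dots>a_K>0$, and let $g,d_F,\mathcal A_\alpha,\rho_\alpha,\mathcal P_{\mathrm{St}}$ be as in the context. For every $\alpha>0$ there exist constants $\beta_3>0$ and $\beta_4>0$ such that for every $\mathbf X^0\in\mathrm{St}(d,K)$ and every sequence generated by $\mathbf X^{t+1}\in\mathcal P_{\mathrm{St}}(\mathcal A_\alpha(\mathbf X^t))$, the following hold for all $t\ge0$: (a) $g(\mathbf X^{t+1})-g(\mathbf X^t)\ge\alpha\|\mathbf X^t-\mathbf X^{t+1}\|_F^2$; (b) $g(\mathbf Q)-g(\mathbf X^t)\le\beta_3\,d_F^2(\mathbf X^t,\mathbf Q)$; (c) $\rho_\alpha(\mathbf X^t)\le\beta_4\|\mathbf X^{t+1}-\mathbf X^t\|_F$.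
   Context: $\mathrm{St}(d,K)=\{\mathbf X\in\mathbb R^{d\times K}:\mathbf X^\top\mathbf X=\mathbf I_K\}$. $g(\mathbf X)=\mathrm{tr}(\mathbf X^\top\mathbf Q\boldsymbol\Theta^2\mathbf Q^\top\mathbf X\,\mathrm{diag}(a_1,\dots,a_K))$. $d_F(\mathbf X,\mathbf Q)=\min_{\mathbf q\in\{1,-1\}^K}\|\mathbf X-\mathbf Q\,\mathrm{diag}(\mathbf q)\|_F$. $\mathcal A_\alpha(\mathbf X)=\alpha\mathbf X+\mathbf Q\boldsymbol\Theta^2\mathbf Q^\top\mathbf X\,\mathrm{diag}(a_1,\dots,a_K)$. $\rho_\alpha(\mathbf X)=\|\mathbf X\mathbf V\boldsymbol\Sigma\mathbf V^\top-\mathcal A_\alpha(\mathbf X)\|_F$ where $\mathcal A_\alpha(\mathbf X)=\mathbf U\boldsymbol\Sigma\mathbf V^\top$ is a thin SVD (equivalently $\mathbf V\boldsymbol\Sigma\mathbf V^\top=(\mathcal A_\alpha(\mathbf X)^\top\mathcal A_\alpha(\mathbf X))^{1/2}$). $\mathcal P_{\mathrm{St}}(\mathbf Y)$ is the set of Frobenius-nearest points of $\mathrm{St}(d,K)$ to $\mathbf Y$. *)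

From HB Require Import structures.
From mathcomp Require Import all_boot all_order all_algebra.
Set Implicit Arguments. Unset Strict Implicit. Unset Printing Implicit Defensive.
Import Order.TTheory GRing.Theory Num.Theory.
Local Open Scope ring_scope.

Section Defs.
Variable R : rcfType.

Definition frob (m n : nat) (A : 'M[R]_(m, n)) : R :=
  Num.sqrt (\sum_(i < m) \sum_(j < n) A i j ^+ 2).

Definition stiefel (d K : nat) (X : 'M[R]_(d, K)) : Prop := X^T *m X = 1%:M.

(* diag(q) for a sign vector q in {1,-1}^K, encoded by a boolean function *)
Definition sign_diag (K : nat) (q : {ffun 'I_K -> bool}) : 'M[R]_K :=
  diag_mx (\row_i (if q i then 1 else -1)).

(* d_F(X,Q) = min_{q in {1,-1}^K} ||X - Q diag(q)||_F  (the seed value is the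
   term for q = all ones, so the big min is the true minimum) *)
Definition dF (d K : nat) (X Q : 'M[R]_(d, K)) : R :=
  \big[Num.min/frob (X - Q)]_(q : {ffun 'I_K -> bool}) frob (X - Q *m sign_diag q).

Definition Theta (K : nat) (lam : 'I_K -> R) : 'M[R]_K :=
  diag_mx (\row_i Num.sqrt (lam i)).

Definition Mmat (d K : nat) (Q : 'M[R]_(d, K)) (lam : 'I_K -> R) : 'M[R]_d :=
  Q *m Theta lam *m Theta lam *m Q^T.

Definition diag_a (K : nat) (a : 'I_K -> R) : 'M[R]_K := diag_mx (\row_i a i).

Definition gfun (d K : nat) (Q : 'M[R]_(d, K)) (lam a : 'I_K -> R)
  (X : 'M[R]_(d, K)) : R :=
  \tr (X^T *m Mmat Q lam *m X *m diag_a a).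

Definition Aalpha (d K : nat) (Q : 'M[R]_(d, K)) (lam a : 'I_K -> R)
  (alpha : R) (X : 'M[R]_(d, K)) : 'M[R]_(d, K) :=
  alpha *: X + Mmat Q lam *m X *m diag_a a.

Definition in_proj_St (d K : nat) (Y X : 'M[R]_(d, K)) : Prop :=
  stiefel X /\ forall Z : 'M[R]_(d, K), stiefel Z -> frob (Y - X) <= frob (Y - Z).

Definition thin_svd (d K : nat) (A U : 'M[R]_(d, K)) (s : 'I_K -> R)
  (V : 'M[R]_K) : Prop :=
  [/\ U^T *m U = 1%:M, V^T *m V = 1%:M, (forall i, 0 <= s i)
    & A = U *m diag_mx (\row_i s i) *m V^T].

(* rho_alpha(X) computed from a thin SVD (U, s, V) of A_alpha(X):
   ||X V Sigma V^T - A_alpha(X)||_F (independent of the chosen SVD) *)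
Definition rho_svd (d K : nat) (Q : 'M[R]_(d, K)) (lam a : 'I_K -> R)
  (alpha : R) (X : 'M[R]_(d, K)) (s : 'I_K -> R) (V : 'M[R]_K) : R :=
  frob (X *m V *m diag_mx (\row_i s i) *m V^T - Aalpha Q lam a alpha X).

End Defs.

(* The projection onto St(d,K) maximizes Z |-> tr(A^T Z) over St(d,K); this is all
   that is used about it.
   (a) Expanding the quadratic form g around X^t, the cross term is controlled by
   maximality against Z = X^t, and the remainder g(X^(t+1) - X^t) is nonnegative.
   (b) With p_k = (Q^T X)_kk we have g(Q) = sum_k lam_k a_k, g(X) >= sum_k lam_k a_k p_k^2
   and ||X - Q diag(s)||^2 = sum_k 2 (1 - s_k p_k) for every sign vector s.
   (c) For a thin SVD A_alpha(X) = U S V^T, maximality against Z = U V^T forces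
   X^(t+1) V S = U S, so X V S V^T - A_alpha(X) = (X - X^(t+1)) V S V^T, whose norm is at
   most ||A_alpha(X)|| ||X^(t+1) - X||; and ||A_alpha(X)|| is bounded on St(d,K). *)

From HB Require Import structures.
From mathcomp Require Import all_boot all_order all_algebra.
From mathcomp Require Import ring lra.

Set Implicit Arguments.
Unset Strict Implicit.
Unset Printing Implicit Defensive.
Import Order.TTheory GRing.Theory Num.Theory.
Local Open Scope ring_scope.

Section FrobeniusNorm.
Variable R : rcfType.
Implicit Types m n : nat.

Lemma frob_ge0 m n (B : 'M[R]_(m, n)) : 0 <= frob B.
Proof. exact: sqrtr_ge0. Qed.

Lemma frob_sqr m n (B : 'M[R]_(m, n)) : frob B ^+ 2 = \sum_i \sum_j B i j ^+ 2.
Proof.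
by rewrite sqr_sqrtr // sumr_ge0 // => i _; rewrite sumr_ge0 // => j _; rewrite sqr_ge0.
Qed.

Lemma frob_sqr_trmx m n (B : 'M[R]_(m, n)) : frob B ^+ 2 = \tr (B *m B^T).
Proof.
rewrite frob_sqr; apply: eq_bigr => i _; rewrite mxE.
by apply: eq_bigr => j _; rewrite !mxE expr2.
Qed.

Lemma frob_sqr_trTmx m n (B : 'M[R]_(m, n)) : frob B ^+ 2 = \tr (B^T *m B).
Proof. by rewrite frob_sqr_trmx mxtrace_mulC. Qed.

Lemma frob_le_sqr m n p q (B : 'M[R]_(m, n)) (C : 'M[R]_(p, q)) c : 0 <= c ->
  frob B ^+ 2 <= (c * frob C) ^+ 2 -> frob B <= c * frob C.
Proof. by move=> c0; rewrite ler_pXn2r // nnegrE ?mulr_ge0 ?frob_ge0. Qed.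

Lemma frobN m n (B : 'M[R]_(m, n)) : frob (- B) = frob B.
Proof.
rewrite /frob; congr Num.sqrt; apply: eq_bigr => i _.
by apply: eq_bigr => j _; rewrite mxE sqrrN.
Qed.

Lemma frob_mulmx_orthogonal m n (B : 'M[R]_(m, n)) (V : 'M[R]_n) :
  V^T *m V = 1%:M -> frob (B *m V) = frob B.
Proof.
move=> /mulmx1C VVt; rewrite /frob -!frob_sqr !frob_sqr_trmx trmx_mul.
by rewrite mulmxA -(mulmxA B) VVt mulmx1.
Qed.

Lemma frob_mul_diag_le m n (G : 'M[R]_(m, n)) (s : 'I_n -> R) c :
  0 <= c -> (forall j, `|s j| <= c) -> frob (G *m diag_mx (\row_j s j)) <= c * frob G.
Proof.
move=> c0 hs; apply: frob_le_sqr => //.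
rewrite exprMn !frob_sqr mulr_sumr; apply: ler_sum => i _.
rewrite mulr_sumr; apply: ler_sum => j _.
rewrite mul_mx_diag !mxE exprMn mulrC; apply: ler_wpM2r; first exact: sqr_ge0.
by rewrite -real_normK ?num_real // lerXn2r ?nnegrE.
Qed.

Lemma gram_diag_ge0 m n (B : 'M[R]_(m, n)) k : 0 <= (B^T *m B) k k.
Proof. by rewrite mxE sumr_ge0 // => l _; rewrite mxE -expr2 sqr_ge0. Qed.

Lemma mulmx_diag_eq0_of_tr_le0 m n (E : 'M[R]_(m, n)) (s : 'I_n -> R) :
  (forall j, 0 <= s j) -> \tr (E *m diag_mx (\row_j s j) *m E^T) <= 0 ->
  E *m diag_mx (\row_j s j) = 0.
Proof.
move=> s0 trle0.
have trE : \tr (E *m diag_mx (\row_j s j) *m E^T) = \sum_i \sum_j E i j ^+ 2 * s j.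
  rewrite mul_mx_diag /mxtrace; apply: eq_bigr => i _; rewrite mxE.
  by apply: eq_bigr => j _; rewrite !mxE expr2 mulrAC.
have term_ge0 i j : 0 <= E i j ^+ 2 * s j by rewrite mulr_ge0 ?sqr_ge0.
have row_ge0 i : 0 <= \sum_j E i j ^+ 2 * s j by rewrite sumr_ge0.
have sum0 : \sum_i \sum_j E i j ^+ 2 * s j = 0.
  by apply/eqP; rewrite eq_le -{1}trE trle0 sumr_ge0.
apply/matrixP => i j; rewrite mul_mx_diag !mxE.
have := psumr_eq0P (fun j _ => term_ge0 i j) (psumr_eq0P (fun i _ => row_ge0 i) sum0 isT) isT.
by move=> Eij0; apply/eqP; rewrite -sqrf_eq0 exprMn [s j ^+ 2]expr2 mulrA Eij0 mul0r.
Qed.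

End FrobeniusNorm.

Section Stiefel.
Variables (R : rcfType) (d K : nat).
Implicit Types A Q X Y Z : 'M[R]_(d, K).

Lemma stiefel_entry_le1 X l j : stiefel X -> `|X l j| <= 1.
Proof.
move=> hX; have : (X^T *m X) j j = 1 by rewrite hX mxE eqxx.
rewrite mxE (bigD1 l) //= !mxE -expr2 => sumX.
have sqX : X l j ^+ 2 <= 1.
  by rewrite -sumX lerDl sumr_ge0 // => i _; rewrite mxE -expr2 sqr_ge0.
by rewrite -(ler_pXn2r (n := 2)) ?nnegrE // expr1n real_normK ?num_real.
Qed.

Lemma stiefel_mul_orthogonal (U : 'M[R]_(d, K)) (V : 'M[R]_K) :
  stiefel U -> V^T *m V = 1%:M -> stiefel (U *m V^T).
Proof.
move=> hU /mulmx1C VVt; rewrite /stiefel trmx_mul trmxK.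
by rewrite mulmxA -(mulmxA V) hU mulmx1.
Qed.

Lemma frob_sqr_subr_stiefel A Z : stiefel Z ->
  frob (A - Z) ^+ 2 = \tr (A^T *m A) - 2 * \tr (A^T *m Z) + K%:R.
Proof.
move=> hZ; rewrite frob_sqr_trTmx [(A - Z)^T]raddfB /=.
rewrite !mulmxBl !mulmxBr !linearB /= hZ mxtrace1.
by rewrite -[\tr (Z^T *m A)]mxtrace_tr trmx_mul trmxK; ring.
Qed.

Lemma in_proj_St_tr_max A Y : in_proj_St A Y ->
  forall Z, stiefel Z -> \tr (A^T *m Z) <= \tr (A^T *m Y).
Proof.
move=> [hY hmin] Z hZ; have := hmin Z hZ.
rewrite -(ler_pXn2r (n := 2)) ?nnegrE ?frob_ge0 // !frob_sqr_subr_stiefel //; lra.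
Qed.

Lemma gram_sub_signed_diag Q X (s : 'I_K -> R) k :
  stiefel Q -> stiefel X -> (forall i, s i ^+ 2 = 1) ->
  ((X - Q *m diag_mx (\row_k s k))^T *m (X - Q *m diag_mx (\row_k s k))) k k
    = 2 - 2 * s k * (Q^T *m X) k k.
Proof.
move=> hQ hX s_sqr; set S := diag_mx _.
have trS : S^T = S by exact: tr_diag_mx.
rewrite [(X - _)^T]raddfB /= trmx_mul trS !mulmxBl !mulmxBr hX.
have SQQS : S *m Q^T *m (Q *m S) = S *m S by rewrite mulmxA -(mulmxA S) hQ mulmx1.
have XQS : X^T *m (Q *m S) = (Q^T *m X)^T *m S by rewrite trmx_mul trmxK mulmxA.
rewrite SQQS XQS -[S *m Q^T *m X]mulmxA mul_diag_mx !mul_mx_diag !mxE !eqxx !mulr1n.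
by rewrite -[s k * s k]expr2 s_sqr; ring.
Qed.

End Stiefel.

Section ThinSVD.
Variables (R : rcfType) (d K : nat) (A U : 'M[R]_(d, K)) (s : 'I_K -> R) (V : 'M[R]_K).
Hypothesis svdA : thin_svd A U s V.
Local Notation S := (diag_mx (\row_j s j)).

Let trS : S^T = S. Proof. exact: tr_diag_mx. Qed.

Lemma thin_svd_frob_sqr : frob A ^+ 2 = \sum_j s j ^+ 2.
Proof.
case: svdA => hU hV _ ->.
rewrite frob_mulmx_orthogonal ?trmxK ?(mulmx1C hV) // frob_sqr_trTmx trmx_mul trS.
rewrite mulmxA -(mulmxA S) hU mulmx1; apply: eq_bigr => j _.
by rewrite mul_diag_mx !mxE eqxx mulr1n expr2.
Qed.

Lemma thin_svd_sv_le_frob j : s j <= frob A.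
Proof.
case: svdA => _ _ s0 _.
rewrite -(ler_pXn2r (n := 2)) ?nnegrE ?frob_ge0 // thin_svd_frob_sqr.
by rewrite (bigD1 j) //= lerDl sumr_ge0 // => i _; rewrite sqr_ge0.
Qed.

Lemma thin_svd_polar_fixed Y : stiefel Y ->
  (forall Z, stiefel Z -> \tr (A^T *m Z) <= \tr (A^T *m Y)) ->
  Y *m V *m S = U *m S.
Proof.
case: svdA => hU hV s0 eA hY hmax.
(* [tr (A^T (U V^T)) - tr (A^T Y) = tr (E S E^T) / 2], and [U V^T] is a Stiefel point. *)
set E := Y *m V - U; set P := U^T *m Y *m V.
have trAt : A^T = V *m S *m U^T by rewrite eA !trmx_mul trmxK trS mulmxA.
have trA_Y : \tr (A^T *m Y) = \tr (S *m P).
  by rewrite trAt /P -!mulmxA mxtrace_mulC !mulmxA.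
have trA_UV : \tr (A^T *m (U *m V^T)) = \tr S.
  by rewrite trAt mulmxA -(mulmxA _ U^T) hU mulmx1 mxtrace_mulC mulmxA hV mul1mx.
have EtE : E^T *m E = 1%:M - P^T - P + 1%:M.
  rewrite /E [(_ - U)^T]raddfB /= trmx_mul !mulmxBl !mulmxBr hU.
  rewrite mulmxA -(mulmxA _ Y^T) hY mulmx1 hV /P !trmx_mul trmxK !mulmxA.
  by rewrite opprB addrA addrAC.
have trESE : \tr (E *m S *m E^T) = 2 * \tr S - 2 * \tr (S *m P).
  rewrite mxtrace_mulC mulmxA EtE !mulmxDl !mulNmx mul1mx !linearD !linearN /=.
  rewrite -[\tr (P^T *m S)]mxtrace_tr trmx_mul trmxK trS (mxtrace_mulC P); ring.
apply/eqP; rewrite -subr_eq0 -mulmxBl; apply/eqP/mulmx_diag_eq0_of_tr_le0 => //.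
by rewrite trESE -trA_UV -trA_Y; have := hmax _ (stiefel_mul_orthogonal hU hV); lra.
Qed.

Lemma frob_polar_residual_le X Y : stiefel Y ->
  (forall Z, stiefel Z -> \tr (A^T *m Z) <= \tr (A^T *m Y)) ->
  frob (X *m V *m S *m V^T - A) <= frob A * frob (Y - X).
Proof.
move=> hY hmax; have fixed := thin_svd_polar_fixed hY hmax.
have [_ hV s0 eA] := svdA.
have -> : X *m V *m S *m V^T - A = (X - Y) *m V *m S *m V^T.
  by rewrite eA -fixed !mulmxBl.
rewrite frob_mulmx_orthogonal ?trmxK ?(mulmx1C hV) //.
apply: le_trans (frob_mul_diag_le _ (frob_ge0 A) _) _ => [j|].
  by rewrite ger0_norm ?thin_svd_sv_le_frob.
by rewrite frob_mulmx_orthogonal // -opprB frobN.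
Qed.

End ThinSVD.

Section Objective.
Variables (R : rcfType) (d K : nat) (Q : 'M[R]_(d, K)) (lam a : 'I_K -> R).
Local Notation g := (gfun Q lam a).
Local Notation M := (Mmat Q lam).
Local Notation D := (diag_a a).

Lemma trmx_Mmat : M^T = M.
Proof. by rewrite /Mmat !trmx_mul trmxK /Theta tr_diag_mx !mulmxA. Qed.

Lemma trmx_diag_a : D^T = D.
Proof. exact: tr_diag_mx. Qed.

Lemma gfun_sumsq X : g X = \sum_i \sum_j (Theta lam *m Q^T *m X) i j ^+ 2 * a j.
Proof.
have -> : g X = \tr ((Theta lam *m Q^T *m X)^T *m (Theta lam *m Q^T *m X) *m D).
  by rewrite !trmx_mul trmxK /Theta tr_diag_mx /gfun /Mmat !mulmxA.
rewrite -mulmxA mxtrace_mulC mul_mx_diag /mxtrace; apply: eq_bigr => i _; rewrite mxE.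
by apply: eq_bigr => j _; rewrite !mxE expr2 mulrAC.
Qed.

Lemma gfun_ge0 X : (forall j, 0 <= a j) -> 0 <= g X.
Proof.
move=> a_ge0; rewrite gfun_sumsq sumr_ge0 // => i _.
by rewrite sumr_ge0 // => j _; rewrite mulr_ge0 ?sqr_ge0.
Qed.

Lemma gfun_expand X Y : g Y = g X + 2 * (\tr (D *m X^T *m M *m Y) - g X) + g (Y - X).
Proof.
have trYX : \tr (Y^T *m M *m X *m D) = \tr (D *m X^T *m M *m Y).
  by rewrite -mxtrace_tr trmx_mul trmx_diag_a trmx_mul trmx_mul trmx_Mmat trmxK !mulmxA.
have trXY : \tr (X^T *m M *m Y *m D) = \tr (D *m X^T *m M *m Y).
  by rewrite mxtrace_mulC !mulmxA.
rewrite {4}/gfun [(Y - X)^T]raddfB /= !mulmxBl !mulmxBr !mulmxBl !linearB /=.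
by rewrite trYX trXY -/(g X) -/(g Y); ring.
Qed.

Lemma gfun_ascent alpha X Y : (forall j, 0 <= a j) -> stiefel X ->
  in_proj_St (Aalpha Q lam a alpha X) Y -> alpha * frob (X - Y) ^+ 2 <= g Y - g X.
Proof.
move=> a_ge0 hX projY; have [hY _] := projY.
have trA Z : \tr ((Aalpha Q lam a alpha X)^T *m Z)
    = alpha * \tr (X^T *m Z) + \tr (D *m X^T *m M *m Z).
  rewrite /Aalpha raddfD /= linearZ /= trmx_mul trmx_diag_a trmx_mul trmx_Mmat.
  by rewrite mulmxDl -scalemxAl linearD linearZ /= !mulmxA.
have trXX : \tr (D *m X^T *m M *m X) = g X by rewrite /gfun -!mulmxA mxtrace_mulC !mulmxA.
have := in_proj_St_tr_max projY hX; rewrite !trA trXX.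
rewrite frob_sqr_subr_stiefel // hX mxtrace1.
have := gfun_expand X Y; have := gfun_ge0 (Y - X) a_ge0; nra.
Qed.

Lemma gfun_Q : stiefel Q -> (forall k, 0 <= lam k) -> g Q = \sum_k lam k * a k.
Proof.
move=> hQ lam_ge0; rewrite /gfun /Mmat.
have -> : Q^T *m (Q *m Theta lam *m Theta lam *m Q^T) *m Q = Theta lam *m Theta lam.
  by rewrite !mulmxA hQ mul1mx -!mulmxA hQ mulmx1.
apply: eq_bigr => k _.
rewrite /diag_a /Theta mul_mx_diag mxE mul_diag_mx !mxE eqxx mulr1n.
by rewrite -expr2 sqr_sqrtr.
Qed.

Lemma gfun_ge_diag X : (forall k, 0 <= lam k) -> (forall j, 0 <= a j) ->
  \sum_k lam k * a k * (Q^T *m X) k k ^+ 2 <= g X.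
Proof.
move=> lam_ge0 a_ge0; rewrite gfun_sumsq; apply: ler_sum => k _.
rewrite (bigD1 k) //= -mulmxA /Theta mul_diag_mx !mxE exprMn sqr_sqrtr //.
rewrite mulrAC lerDl sumr_ge0 // => j _; rewrite mulr_ge0 ?sqr_ge0 //.
Qed.

Lemma Aalpha_bounded alpha :
  exists C, 0 <= C /\ forall X, stiefel X -> frob (Aalpha Q lam a alpha X) <= C.
Proof.
set c := fun i j => `|alpha| + (\sum_l `|Mmat Q lam i l|) * `|a j|.
exists (Num.sqrt (\sum_i \sum_j c i j ^+ 2)); split=> [|X hX]; first exact: sqrtr_ge0.
have entry_le i j : `|Aalpha Q lam a alpha X i j| <= c i j.
  rewrite /Aalpha /diag_a mul_mx_diag !mxE; apply: le_trans (ler_normD _ _) _.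
  rewrite !normrM lerD //.
    by rewrite -[leRHS]mulr1 ler_wpM2l ?stiefel_entry_le1.
  rewrite ler_wpM2r // (le_trans (ler_norm_sum _ _ _)) // ler_sum // => l _.
  by rewrite normrM -[leRHS]mulr1 ler_wpM2l ?stiefel_entry_le1.
rewrite ler_sqrt ?ler_sum // => [i _|]; last first.
  by rewrite sumr_ge0 // => i _; rewrite sumr_ge0 // => j _; rewrite sqr_ge0.
rewrite ler_sum // => j _; rewrite -real_normK ?num_real // ler_pXn2r ?nnegrE //.
exact: le_trans (normr_ge0 _) (entry_le i j).
Qed.

End Objective.

Section OptimalityGap.
Variables (R : rcfType) (d K : nat) (Q : 'M[R]_(d, K)) (lam a : 'I_K -> R).
Hypotheses (hQ : stiefel Q) (lam_ge0 : forall k, 0 <= lam k) (a_ge0 : forall k, 0 <= a k).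
Local Notation g := (gfun Q lam a).

Lemma gfun_gap_le_signed X (s : 'I_K -> R) : stiefel X -> (forall k, s k ^+ 2 = 1) ->
  g Q - g X <= (\sum_k lam k * a k) * frob (X - Q *m diag_mx (\row_k s k)) ^+ 2.
Proof.
move=> hX s_sqr; rewrite gfun_Q // frob_sqr_trTmx mulr_sumr.
set B := \sum_k lam k * a k.
apply: le_trans (_ : _ <= B - \sum_k lam k * a k * (Q^T *m X) k k ^+ 2) _.
  by have := gfun_ge_diag Q X lam_ge0 a_ge0; lra.
rewrite /B -sumrB; apply: ler_sum => k _.
have := gram_diag_ge0 (X - Q *m diag_mx (\row_k s k)) k.
rewrite gram_sub_signed_diag // => dist_ge0.
have la_le_B : lam k * a k <= B.
  by rewrite /B (bigD1 k) //= lerDl sumr_ge0 // => i _; rewrite mulr_ge0.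
have la_ge0 : 0 <= lam k * a k by rewrite mulr_ge0.
rewrite -/B; set p := (Q^T *m X) k k in dist_ge0 *.
have : 0 <= (B - lam k * a k) * (2 - 2 * s k * p) by rewrite mulr_ge0 // subr_ge0.
(* [1 - p^2 = 2 (1 - s p) - (p - s)^2] since [s^2 = 1] *)
have := mulr_ge0 la_ge0 (sqr_ge0 (p - s k)); have := s_sqr k; nra.
Qed.

Lemma gfun_gap_le_dF X : stiefel X -> g Q - g X <= (\sum_k lam k * a k) * dF X Q ^+ 2.
Proof.
move=> hX; rewrite /dF.
apply: (big_ind (fun v => g Q - g X <= (\sum_k lam k * a k) * v ^+ 2)).
- have := gfun_gap_le_signed (s := fun _ => 1) hX (fun _ => expr1n _ _).
  suff -> : diag_mx (\row_k (1 : R)) = 1%:M :> 'M[R]_K by rewrite mulmx1.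
  by apply/matrixP => i j; rewrite !mxE.
- by move=> x y hx hy; rewrite /Order.min; case: ifP.
- move=> q _; apply: gfun_gap_le_signed => // k.
  by case: (q k); rewrite ?sqrrN expr1n.
Qed.

End OptimalityGap.

Theorem proposition1 (R : rcfType) (d K : nat) (hK : (0 < K)%N) (hdK : (K < d)%N)
  (Q : 'M[R]_(d, K)) (hQ : stiefel Q)
  (lam : 'I_K -> R) (hlam_dec : forall i j : 'I_K, (i < j)%N -> lam j < lam i)
  (hlam_pos : forall i, 0 < lam i)
  (a : 'I_K -> R) (ha_dec : forall i j : 'I_K, (i < j)%N -> a j < a i)
  (ha_pos : forall i, 0 < a i) :
  forall alpha : R, 0 < alpha ->
  exists beta3 beta4 : R, 0 < beta3 /\ 0 < beta4 /\
  forall Xs : nat -> 'M[R]_(d, K),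
    stiefel (Xs 0%N) ->
    (forall t, in_proj_St (Aalpha Q lam a alpha (Xs t)) (Xs t.+1)) ->
    forall t : nat,
      [/\ gfun Q lam a (Xs t.+1) - gfun Q lam a (Xs t)
            >= alpha * frob (Xs t - Xs t.+1) ^+ 2,
          gfun Q lam a Q - gfun Q lam a (Xs t) <= beta3 * dF (Xs t) Q ^+ 2
        & forall (U : 'M[R]_(d, K)) (s : 'I_K -> R) (V : 'M[R]_K),
            thin_svd (Aalpha Q lam a alpha (Xs t)) U s V ->
            rho_svd Q lam a alpha (Xs t) s V <= beta4 * frob (Xs t.+1 - Xs t)].
Proof.
move=> alpha _.
have a_ge0 i : 0 <= a i := ltW (ha_pos i).
have lam_ge0 i : 0 <= lam i := ltW (hlam_pos i).
have [C [C_ge0 frobA_le]] := Aalpha_bounded Q lam a alpha.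
have B_ge0 : 0 <= \sum_k lam k * a k by rewrite sumr_ge0 // => k _; rewrite mulr_ge0.
exists (\sum_k lam k * a k + 1), (C + 1); split; [lra | split; [lra |]].
move=> Xs X0 step.
have Xs_stiefel t : stiefel (Xs t) by case: t => [|t] //; case: (step t).
move=> t; split.
- exact: gfun_ascent (Xs_stiefel t) (step t).
- apply: le_trans (gfun_gap_le_dF hQ lam_ge0 a_ge0 (Xs_stiefel t)) _.
  by rewrite ler_wpM2r ?sqr_ge0 // lerDl.
- move=> U s V svdA; have [hY _] := step t.
  apply: le_trans (frob_polar_residual_le svdA (Xs t) hY (in_proj_St_tr_max (step t))) _.
  rewrite ler_wpM2r ?frob_ge0 //.
  by apply: le_trans (frobA_le _ (Xs_stiefel t)) _; rewrite lerDl.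
Qed.
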